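(* Let $K$ be the set of separable states of $\mathcal{B}(\mathbb{C}^2\otimes\mathbb{C}^2)$. Then the pure states $|01\rangle\langle01|$ and $|10\rangle\langle10|$ are not superposable in $K$.
   Context: States of $\mathcal{B}(\mathbb{C}^2\otimes\mathbb{C}^2)$ are identified with density operators on $\mathbb{C}^2\otimes\mathbb{C}^2$; a pure product state is $E\otimes F$ with $E,F$ rank-one projections on $\mathbb{C}^2$, and $K$ is the set of convex combinations of pure product states. $\{|0\rangle,|1\rangle\}$ is the standard orthonormal basis of $\mathbb{C}^2$ and $|ab\rangle=|a\rangle\otimes|b\rangle$. For a convex set $K$, $A(K)$ is the set of affine functions $K\to\mathbb{R}$, and for extreme points $x,y$ the affine ratio is $\langle x,y\rangle_K=\inf\{f(y): f\in A(K),\ \mathrm{range}(f)\subseteq[0,1],\ f(x)=1\}$. Extreme points $x,y$ are orthogonal if $\langle x,y\rangle_K=0$; orthogonal extreme points $x,y$ are superposable in $K$ if there is an extreme point $z$ of $K$ with $\langle x,z\rangle_K=\tfrac12=\langle y,z\rangle_K$. *)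

From HB Require Import structures.
From mathcomp Require Import all_boot all_order all_algebra.
From mathcomp Require Import complex mxtens.
From mathcomp Require Import classical_sets reals.

Set Implicit Arguments.
Unset Strict Implicit.
Unset Printing Implicit Defensive.
Import Order.TTheory GRing.Theory Num.Theory.
Local Open Scope ring_scope.

Section Separable.
Variable R : realType.

Local Notation C := (complex R).

(* operators on C^2 and on C^2 (x) C^2 = C^(2*2); the tensor product is
   mxtens.tensmx, whose index (a,b) |-> 2a+b, so |ab> is basis vector 2a+b *)
Notation op2 := 'M[C]_2.
Notation op4 := 'M[C]_(2 * 2).

Definition rc (t : R) : C := real_complex R t.

Definition adjoint n (A : 'M[C]_n) : 'M[C]_n := (map_mx Num.conj A)^T.

Definition rank_one_proj (E : op2) : Prop :=
  E *m E = E /\ adjoint E = E /\ \rank E = 1%N.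

Definition pure_product_state (A : op4) : Prop :=
  exists E F : op2, rank_one_proj E /\ rank_one_proj F /\ A = tensmx E F.

Definition Ksep (A : op4) : Prop :=
  exists (n : nat) (lam : 'I_n -> R) (P : 'I_n -> op4),
    (forall i, 0 <= lam i) /\ \sum_(i < n) lam i = 1 /\
    (forall i, pure_product_state (P i)) /\
    A = \sum_(i < n) rc (lam i) *: P i.

Definition cconv (t : R) (a b : op4) : op4 := rc t *: a + rc (1 - t) *: b.

Definition affine_on_K (f : op4 -> R) : Prop :=
  forall a b t, Ksep a -> Ksep b -> 0 <= t <= 1 ->
    f (cconv t a b) = t * f a + (1 - t) * f b.

Definition K_extreme (x : op4) : Prop :=
  Ksep x /\ forall a b t, Ksep a -> Ksep b -> 0 < t < 1 ->
    x = cconv t a b -> a = x /\ b = x.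

Definition affine_ratio (x y : op4) : R :=
  inf [set r : R | exists f : op4 -> R,
        affine_on_K f /\ (forall k, Ksep k -> 0 <= f k <= 1) /\
        f x = 1 /\ r = f y].

Definition K_orthogonal (x y : op4) : Prop :=
  K_extreme x /\ K_extreme y /\ affine_ratio x y = 0.

Definition K_superposable (x y : op4) : Prop :=
  K_orthogonal x y /\
  exists z, K_extreme z /\ affine_ratio x z = 2^-1 /\ affine_ratio y z = 2^-1.

Definition ketbra (a : 'I_2) : op2 := delta_mx a a.
Definition ketbra2 (a b : 'I_2) : op4 := tensmx (ketbra a) (ketbra b).

End Separable.

From HB Require Import structures.
From mathcomp Require Import all_boot all_order all_algebra.
From mathcomp Require Import complex mxtens.
From mathcomp Require Import classical_sets reals.
From mathcomp Require Import ring lra.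
Set Implicit Arguments.
Unset Strict Implicit.
Unset Printing Implicit Defensive.

Import Order.TTheory GRing.Theory Num.Theory.
Local Open Scope ring_scope.

(* The diagonal entry [weight i j] of a state at |ij> is affine on K with
   values in [0, 1], and on K it equals 1 only at |ij><ij|.  Hence |ij><ij| is
   an extreme point of K and <x, y>_K <= weight i j y whenever
   weight i j x = 1; in particular <|01>, |10>>_K = 0.  An extreme point z of
   K is a pure product state E (x) F, so with a = E_00 and c = F_00 the ratios
   of z with |01> and |10> are at most a (1 - c) and (1 - a) c, whose product
   is at most 1/16: they cannot both be 1/2. *)

Lemma ord2P (i : 'I_2) : i = 0 \/ i = 1.
Proof. by case: i => [[|[|//]]] ?; [left|right]; apply: val_inj. Qed.

Lemma eq_mx2 (F : Type) (A B : 'M[F]_2) :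
  [/\ A 0 0 = B 0 0, A 0 1 = B 0 1, A 1 0 = B 1 0 & A 1 1 = B 1 1] -> A = B.
Proof.
case=> e00 e01 e10 e11; apply/matrixP => i j.
by case: (ord2P i) => ->; case: (ord2P j) => ->.
Qed.

Lemma mulmx2E (F : pzSemiRingType) (A B : 'M[F]_2) i j :
  (A *m B) i j = A i 0 * B 0 j + A i 1 * B 1 j.
Proof.
by rewrite mxE big_ord_recl big_ord1 (_ : lift ord0 ord0 = 1) //; apply: val_inj.
Qed.

Lemma idempotent_mx2_trace (F : idomainType) (E : 'M[F]_2) :
  E *m E = E -> E != 0 -> E != 1%:M -> E 0 0 + E 1 1 = 1.
Proof.
move=> idE nz0 nz1; apply/eqP/negPn/negP => tr1.
have m i j : E i j = E i 0 * E 0 j + E i 1 * E 1 j by rewrite -{1}idE mulmx2E.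
have t0 : 1 - (E 0 0 + E 1 1) != 0 by rewrite subr_eq0 eq_sym.
have e01 : E 0 1 = 0.
  have : E 0 1 * (1 - (E 0 0 + E 1 1)) = E 0 1 - (E 0 0 * E 0 1 + E 0 1 * E 1 1).
    by ring.
  by rewrite -m subrr => /eqP; rewrite mulf_eq0 (negPf t0) orbF => /eqP.
have e10 : E 1 0 = 0.
  have : E 1 0 * (1 - (E 0 0 + E 1 1)) = E 1 0 - (E 1 0 * E 0 0 + E 1 1 * E 1 0).
    by ring.
  by rewrite -m subrr => /eqP; rewrite mulf_eq0 (negPf t0) orbF => /eqP.
have zero_or_one (x : F) : x = x * x -> x = 0 \/ x = 1.
  move=> xx; have : x * (x - 1) = 0 by rewrite mulrBr mulr1 -xx subrr.
  by move/eqP; rewrite mulf_eq0 subr_eq0 => /orP[] /eqP; [left|right].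
have := m 0 0; have := m 1 1; rewrite e01 e10 !mul0r ?mulr0 add0r addr0.
move=> /zero_or_one[] e11 /zero_or_one[] e00.
all: rewrite e00 e11 ?addr0 ?add0r ?eqxx // in tr1.
- by move: nz0; rewrite (@eq_mx2 _ E 0) ?eqxx //; split; rewrite mxE.
- by move: nz1; rewrite (@eq_mx2 _ E 1%:M) ?eqxx //; split; rewrite !mxE.
Qed.

Lemma mulr1B_le_inv4 (F : realFieldType) (x : F) : x * (1 - x) <= 4^-1.
Proof. by have := sqr_ge0 (x - 2^-1); nra. Qed.

Lemma convex_comb_bound (F : realDomainType) n (lam v : 'I_n -> F) :
  (forall k, 0 <= lam k) -> \sum_k lam k = 1 -> (forall k, 0 <= v k <= 1) ->
  0 <= \sum_k lam k * v k <= 1.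
Proof.
move=> lam_ge0 lam1 v01; apply/andP; split.
  by apply: sumr_ge0 => k _; case/andP: (v01 k) => v0 _; apply: mulr_ge0.
rewrite -lam1; apply: ler_sum => k _; case/andP: (v01 k) => _ v1.
exact: ler_piMr.
Qed.

Lemma convex_comb_eq1 (F : realDomainType) n (lam v : 'I_n -> F) :
  (forall k, 0 <= lam k) -> \sum_k lam k = 1 -> (forall k, v k <= 1) ->
  \sum_k lam k * v k = 1 -> forall k, lam k = 0 \/ v k = 1.
Proof.
move=> lam_ge0 lam1 v1 sum1 k.
have : \sum_k lam k * (1 - v k) = 0.
  by under eq_bigr do rewrite mulrBr mulr1; rewrite sumrB lam1 sum1 subrr.
have terms_ge0 l : true -> 0 <= lam l * (1 - v l) by rewrite mulr_ge0 ?subr_ge0.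
move/(psumr_eq0P terms_ge0)/(_ k isT)/eqP.
by rewrite mulf_eq0 subr_eq0 => /orP[] /eqP; [left|right].
Qed.

Section Separable.
Variable R : realType.
Local Notation C := (complex R).
Local Notation op2 := 'M[C]_2.
Local Notation op4 := 'M[C]_(2 * 2).

Lemma rank_one_proj_coords (E : op2) : rank_one_proj E -> exists a b b' : R,
  [/\ E 0 0 = rc a, E 1 1 = rc (1 - a), E 0 1 = (b +i* b')%C,
      E 1 0 = (b +i* - b')%C & a = a ^+ 2 + b ^+ 2 + b' ^+ 2].
Proof.
case=> idE [herm rk1].
have tr : E 0 0 + E 1 1 = 1.
  by apply: idempotent_mx2_trace => //; apply: contra_eqN rk1 => /eqP ->;
    rewrite ?mxrank0 ?mxrank1.
have h i j : E i j = (E j i)^* by rewrite -{1}herm /adjoint !mxE.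
have m00 : E 0 0 = E 0 0 * E 0 0 + E 0 1 * E 1 0 by rewrite -{1}idE mulmx2E.
rewrite (h 1 0) in m00 *; move: tr m00 (h 0 0) (h 1 1).
case: (E 0 0) => a a'; case: (E 0 1) => b b'; case: (E 1 1) => d d' /=.
move=> [tr _] [m00 _] [a'0] [d'0].
have -> : a' = 0 by lra.
have -> : d' = 0 by lra.
have -> : d = 1 - a by lra.
by exists a, b, b'; split => //; nra.
Qed.

Lemma rank_one_proj_diag (E : op2) : rank_one_proj E ->
  exists2 a : R, 0 <= a <= 1 & E 0 0 = rc a /\ E 1 1 = rc (1 - a).
Proof.
case/rank_one_proj_coords => a [b [b' [e00 e11 _ _ ha]]].
by exists a => //; apply/andP; split; nra.
Qed.

Lemma rank_one_proj_diag_bound (E : op2) i : rank_one_proj E ->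
  exists2 a : R, 0 <= a <= 1 & E i i = rc a.
Proof.
case/rank_one_proj_diag => a ha [e00 e11].
by case: (ord2P i) => ->; [exists a | exists (1 - a)] => //; lra.
Qed.

Lemma rank_one_proj_ketbra (E : op2) i : rank_one_proj E -> E i i = 1 -> E = ketbra R i.
Proof.
case/rank_one_proj_coords => a [b [b' [e00 e11 e01 e10 ha]]].
case: (ord2P i) => ->; rewrite ?e00 ?e11 => -[a1]; last have {}a1 : a = 0 by lra.
all: have [b0 b'0] : b = 0 /\ b' = 0 by split; nra.
all: apply: eq_mx2; rewrite /ketbra !mxE e00 e11 e01 e10 a1 b0 b'0 /=.
all: by rewrite /rc ?subrr ?subr0 ?oppr0 ?rmorph0 ?rmorph1.
Qed.

Definition weight (i j : 'I_2) (A : op4) : R :=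
  complex.Re (A (mxtens_index (i, j)) (mxtens_index (i, j))).

Lemma weight0 i j : weight i j 0 = 0.
Proof. by rewrite /weight mxE. Qed.

Lemma weightD i j (A B : op4) : weight i j (A + B) = weight i j A + weight i j B.
Proof. by rewrite /weight mxE; case: (A _ _) => ? ?; case: (B _ _). Qed.

Lemma weightZ i j s (A : op4) : weight i j (rc s *: A) = s * weight i j A.
Proof. by rewrite /weight mxE; case: (A _ _) => u v /=; ring. Qed.

Lemma weight_sum i j n (lam : 'I_n -> R) (P : 'I_n -> op4) :
  weight i j (\sum_(k < n) rc (lam k) *: P k) = \sum_(k < n) lam k * weight i j (P k).
Proof.
rewrite (big_morph _ (weightD i j) (weight0 i j)).
by apply: eq_bigr => k _; rewrite weightZ.
Qed.

Lemma weight_cconv i j t (A B : op4) :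
  weight i j (cconv t A B) = t * weight i j A + (1 - t) * weight i j B.
Proof. by rewrite /cconv weightD !weightZ. Qed.

Lemma weight_tensmx i j (E F : op2) :
  weight i j (E *t F) = complex.Re (E i i * F j j).
Proof. by rewrite /weight tensmxE. Qed.

Lemma weight_ketbra2 i j k l : weight i j (ketbra2 R k l) = ((i == k) && (j == l))%:R.
Proof.
rewrite /ketbra2 weight_tensmx /ketbra !mxE !andbb.
by case: eqP => _; case: eqP => _; rewrite /= ?mulr1 ?mulr0 subr0.
Qed.

Lemma ketbra_rank_one_proj a : rank_one_proj (ketbra R a).
Proof.
rewrite /rank_one_proj /ketbra mul_delta_mx mxrank_delta /adjoint.
by rewrite map_delta_mx trmx_delta.
Qed.

Lemma ketbra2_pure a b : pure_product_state (ketbra2 R a b).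
Proof.
by exists (ketbra R a), (ketbra R b); split; [|split] => //; apply: ketbra_rank_one_proj.
Qed.

Lemma pure_product_state_Ksep (P : op4) : pure_product_state P -> Ksep P.
Proof.
move=> pureP; exists 1%N, (fun=> 1), (fun=> P).
by rewrite big_ord1 /rc rmorph1 scale1r big_ord1.
Qed.

Lemma Re_rcM (a c : R) : complex.Re (rc a * rc c) = a * c.
Proof. by rewrite /= mulr0 subr0. Qed.

Lemma weight_pure_bound i j (P : op4) : pure_product_state P -> 0 <= weight i j P <= 1.
Proof.
case=> E [F [hE [hF ->]]]; rewrite weight_tensmx.
have [a ha ->] := rank_one_proj_diag_bound i hE.
have [c hc ->] := rank_one_proj_diag_bound j hF.
by rewrite Re_rcM; apply/andP; split; nra.
Qed.

Lemma weight_pure_eq1 i j (P : op4) :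
  pure_product_state P -> weight i j P = 1 -> P = ketbra2 R i j.
Proof.
case=> E [F [hE [hF ->]]]; rewrite weight_tensmx.
have [a ha Ei] := rank_one_proj_diag_bound i hE.
have [c hc Fj] := rank_one_proj_diag_bound j hF.
rewrite Ei Fj Re_rcM => ac1.
have [a1 c1] : a = 1 /\ c = 1 by split; nra.
rewrite a1 /rc rmorph1 in Ei; rewrite c1 /rc rmorph1 in Fj.
by rewrite /ketbra2 (rank_one_proj_ketbra hE Ei) (rank_one_proj_ketbra hF Fj).
Qed.

Lemma weight01_weight10_pure_le (P : op4) :
  pure_product_state P -> weight 0 1 P * weight 1 0 P <= 16^-1.
Proof.
case=> E [F [hE [hF ->]]]; rewrite !weight_tensmx.
have [a ha [-> ->]] := rank_one_proj_diag hE.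
have [c hc [-> ->]] := rank_one_proj_diag hF.
rewrite !Re_rcM mulrACA [(1 - c) * c]mulrC.
have := mulr1B_le_inv4 a; have := mulr1B_le_inv4 c.
have : 0 <= a * (1 - a) by nra.
have : 0 <= c * (1 - c) by nra.
nra.
Qed.

Lemma Ksep_weight_bound i j (A : op4) : Ksep A -> 0 <= weight i j A <= 1.
Proof.
case=> n [lam [P [lam_ge0 [lam1 [pureP ->]]]]]; rewrite weight_sum.
by apply: convex_comb_bound => // k; apply: weight_pure_bound.
Qed.

Lemma Ksep_weight_eq1 i j (A : op4) : Ksep A -> weight i j A = 1 -> A = ketbra2 R i j.
Proof.
case=> n [lam [P [lam_ge0 [lam1 [pureP ->]]]]]; rewrite weight_sum => w1.
have v1 k : weight i j (P k) <= 1 by case/andP: (weight_pure_bound i j (pureP k)).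
have term k : rc (lam k) *: P k = rc (lam k) *: ketbra2 R i j.
  case: (convex_comb_eq1 lam_ge0 lam1 v1 w1 k) => [-> | /(weight_pure_eq1 (pureP k)) -> //].
  by rewrite /rc rmorph0 !scale0r.
rewrite (eq_bigr _ (fun k _ => term k)) -scaler_suml /rc -rmorph_sum lam1.
by rewrite rmorph1 scale1r.
Qed.

Lemma weight_affine i j : affine_on_K (weight i j).
Proof. by move=> A B t _ _ _; apply: weight_cconv. Qed.

Lemma K_extreme_ketbra2 i j : K_extreme (ketbra2 R i j).
Proof.
split=> [|A B t KA KB /andP[t0 t1] AB]; first exact/pure_product_state_Ksep/ketbra2_pure.
have := congr1 (weight i j) AB; rewrite weight_cconv weight_ketbra2 !eqxx /= => w.
have /andP[_ wA] := Ksep_weight_bound i j KA.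
have /andP[_ wB] := Ksep_weight_bound i j KB.
by split; apply: Ksep_weight_eq1 => //; nra.
Qed.

Lemma affine_ratio_ge0 (x y : op4) : Ksep y -> 0 <= affine_ratio x y.
Proof.
move=> Ky; apply: lb_le_inf => [|r [f [_ [f01 [_ ->]]]]]; last by case/andP: (f01 y Ky).
exists 1, (fun=> 1); split; first by move=> *; ring.
by split=> // k _; rewrite lexx ler01.
Qed.

Lemma affine_ratio_le (f : op4 -> R) (x y : op4) :
  affine_on_K f -> (forall k, Ksep k -> 0 <= f k <= 1) -> f x = 1 -> Ksep y ->
  affine_ratio x y <= f y.
Proof.
move=> f_aff f01 fx1 Ky; apply: ge_inf; last by exists f.
by exists 0 => r [g [_ [g01 [_ ->]]]]; case/andP: (g01 y Ky).
Qed.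

Lemma Ksep_pure_or_cconv (A : op4) : Ksep A -> pure_product_state A \/
  exists t P B, [/\ 0 < t < 1, pure_product_state P, Ksep B & A = cconv t P B].
Proof.
case=> n [lam [P [lam_ge0 [lam1 [pureP ->]]]]].
have /hasP[k _ /andP[_ lk_gt0]] : has (fun k => true && (0 < lam k)) (index_enum 'I_n).
  by rewrite -psumr_neq0 // lam1 oner_neq0.
have rest1 : \sum_(j | j != k) lam j = 1 - lam k.
  by move: lam1; rewrite (bigD1 k) //=; lra.
have rest_ge0 : 0 <= \sum_(j | j != k) lam j by apply: sumr_ge0.
rewrite (bigD1 k) //=.
have [lk1 | lk_neq1] := eqVneq (lam k) 1.
  left; rewrite lk1 /rc rmorph1 scale1r big1 ?addr0 // => j jk.
  rewrite lk1 subrr in rest1.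
  by rewrite (psumr_eq0P (fun j _ => lam_ge0 j) rest1 jk) rmorph0 scale0r.
have t_neq0 : 1 - lam k != 0 by rewrite subr_eq0 eq_sym.
right; exists (lam k), (P k), (\sum_(j | j != k) rc (lam j / (1 - lam k)) *: P j).
split=> //.
- by rewrite lk_gt0 lt_neqAle lk_neq1 /=; lra.
- exists n, (fun j => if j == k then 0 else lam j / (1 - lam k)), P.
  split=> [j|]; first by case: eqP => // _; rewrite divr_ge0 // subr_ge0; lra.
  rewrite (bigD1 k) //= eqxx add0r (eq_bigr (fun j => lam j / (1 - lam k)));
    last by move=> j /negPf ->.
  rewrite -mulr_suml rest1 divff //; split=> //; split=> //.
  rewrite [RHS](bigD1 k) //= eqxx /rc rmorph0 scale0r add0r.
  by apply: eq_bigr => j /negPf ->.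
- rewrite /cconv scaler_sumr; congr (_ + _); apply: eq_bigr => j _.
  by rewrite scalerA /rc -rmorphM mulrC divfK.
Qed.

Lemma K_extreme_pure (z : op4) : K_extreme z -> pure_product_state z.
Proof.
case=> /Ksep_pure_or_cconv[// | [t [P [B [t01 pureP KB z_PB]]]]] ext_z.
by have [<- _] := ext_z P B t (pure_product_state_Ksep pureP) KB t01 z_PB.
Qed.

Lemma affine_ratio_le_weight i j (x y : op4) :
  weight i j x = 1 -> Ksep y -> affine_ratio x y <= weight i j y.
Proof. exact: affine_ratio_le (weight_affine i j) (@Ksep_weight_bound i j). Qed.

End Separable.

Theorem lemma3 (R : realType) :
  K_orthogonal (ketbra2 R 0 1) (ketbra2 R 1 0) /\
  ~ K_superposable (ketbra2 R 0 1) (ketbra2 R 1 0).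
Proof.
have w01 : weight 0 1 (ketbra2 R 0 1) = 1 by rewrite weight_ketbra2.
have w10 : weight 1 0 (ketbra2 R 1 0) = 1 by rewrite weight_ketbra2.
split.
  split; last split; [exact: K_extreme_ketbra2 | exact: K_extreme_ketbra2 |].
  have K10 := pure_product_state_Ksep (ketbra2_pure R 1 0).
  apply/le_anti/andP; split; last exact: affine_ratio_ge0.
  by have := affine_ratio_le_weight w01 K10; rewrite weight_ketbra2.
case=> _ [z [ext_z [ratio01 ratio10]]].
have pure_z := K_extreme_pure ext_z.
have Kz := pure_product_state_Ksep pure_z.
have := affine_ratio_le_weight w01 Kz; have := affine_ratio_le_weight w10 Kz.
rewrite ratio01 ratio10; have := weight01_weight10_pure_le pure_z.
nra.
Qed.
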